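(* Let $(\mathcal{S},\mathcal{A},P,r)$ be an MDP with finite state and action spaces and $r\in[0,1]$, and let $\widehat P$ be the empirical kernel formed from $n$ i.i.d. samples $S^1_{s,a},\dots,S^n_{s,a}\sim P(\cdot\mid s,a)$ for each $(s,a)$. Fix $\gamma\in(0,1)$, $M>0$ and $s\in\mathcal{S}$. For $u\in[0,1]$, let $\widehat V^{(s,u)}_{\gamma,M}$ be the unique fixed point of $\mathrm{Clip}_M\circ\widehat{\mathcal{T}}^{(s,u)}_\gamma$ and let $\widehat V^\star_{\gamma,M}$ be the unique fixed point of $\mathrm{Clip}_M\circ\widehat{\mathcal{T}}_\gamma$. Then: (i) for any $u,u'\in[0,1]$, $\|\widehat V^{(s,u)}_{\gamma,M}-\widehat V^{(s,u')}_{\gamma,M}\|_\infty\le\frac{|u-u'|}{1-\gamma}$; (ii) with $u^\star(s)=\widehat{\mathcal{T}}_\gamma(\widehat V^\star_{\gamma,M})(s)-\gamma\widehat V^\star_{\gamma,M}(s)$, we have $u^\star(s)\in[0,1]$ and $\widehat V^{(s,u^\star(s))}_{\gamma,M}=\widehat V^\star_{\gamma,M}$; (iii) for any $\varepsilon>0$ there is a finite set $U\subset[0,1]$ with $|U|=\lceil\frac1{2(1-\gamma)\varepsilon}\rceil$ such that almost surely, for every $s\in\mathcal{S}$ there exists $u\in U$ with $\|\widehat V^\star_{\gamma,M}-\widehat V^{(s,u)}_{\gamma,M}\|_\infty\le\varepsilon$; (iv) for any $u\in[0,1]$ and $a\in\mathcal{A}$, $\widehat V^{(s,u)}_{\gamma,M}$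 is independent of the samples $S^1_{s,a},\dots,S^n_{s,a}$.
   Context: $\widehat{\mathcal{T}}_\gamma(x)(s')=\max_a\big(r(s',a)+\gamma\sum_{s''}\widehat P(s''\mid s',a)x(s'')\big)$. $\widehat P^{(s)}$ equals $\widehat P$ except that $s$ is absorbing: $\widehat P^{(s)}(\cdot\mid s'',a)=\widehat P(\cdot\mid s'',a)$ for $s''\ne s$ and $\widehat P^{(s)}(s\mid s,a)=1$. $r^{(s,u)}$ equals $r$ except $r^{(s,u)}(s,a)=u$ for all $a$. $\widehat{\mathcal{T}}^{(s,u)}_\gamma(x)(s')=\max_a\big(r^{(s,u)}(s',a)+\gamma\sum_{s''}\widehat P^{(s)}(s''\mid s',a)x(s'')\big)$. $\mathrm{Clip}_M(V)=\min\{V,(M+\min_{s'}V(s'))\mathbf 1\}$ elementwise; $\mathrm{Clip}_M$ composed with a $\gamma$-discounted Bellman operator is a $\gamma$-contraction in $\|\cdot\|_\infty$, so these fixed points exist and are unique. *)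

From HB Require Import structures.
From mathcomp Require Import all_boot all_order all_algebra.
From mathcomp Require Import all_classical all_reals ereal.
Set Implicit Arguments. Unset Strict Implicit. Unset Printing Implicit Defensive.
Import Order.TTheory GRing.Theory Num.Theory.
Local Open Scope ring_scope.

Section Defs.
Variables (R : realType) (S A : finType).

Definition fmax (T : finType) (F : T -> R) : R :=
  fine (\big[Order.max/-oo%E]_(t : T) (F t)%:E).
Definition fmin (T : finType) (F : T -> R) : R :=
  fine (\big[Order.min/+oo%E]_(t : T) (F t)%:E).

Definition supnorm (V : S -> R) : R := \big[Num.max/0]_(t : S) `|V t|.

(* Bellman optimality operator for reward rw and kernel Q (Q s a t = Q(t|s,a)) *)
Definition bellman (rw : S -> A -> R) (Q : S -> A -> S -> R) (gamma : R)
  (x : S -> R) : S -> R :=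
  fun s' => fmax (fun a : A => rw s' a + gamma * \sum_(s'' : S) Q s' a s'' * x s'').

Definition absorb (Q : S -> A -> S -> R) (s : S) : S -> A -> S -> R :=
  fun s'' a t => if s'' == s then (t == s)%:R else Q s'' a t.

Definition rew_set (rw : S -> A -> R) (s : S) (u : R) : S -> A -> R :=
  fun s' a => if s' == s then u else rw s' a.

Definition clip (M : R) (V : S -> R) : S -> R :=
  fun t => Num.min (V t) (M + fmin V).

Definition fixpt (F : (S -> R) -> (S -> R)) : S -> R :=
  xget (fun _ => 0) (fun V => F V = V).

(* sample outcomes: X (s,a,i) = S^{i+1}_{s,a} *)
Definition samples (n : nat) := {ffun S * A * 'I_n -> S}.

Definition emp_kernel (n : nat) (X : samples n) : S -> A -> S -> R :=
  fun s a t => #|[set i : 'I_n | X (s, a, i) == t]|%:R / n%:R.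

(* probability of an outcome: samples independent, S^i_{s,a} ~ P(.|s,a) *)
Definition prob (P : S -> A -> S -> R) (n : nat) (X : samples n) : R :=
  \prod_(k : S * A * 'I_n) P k.1.1 k.1.2 (X k).

Definition Pr (P : S -> A -> S -> R) (n : nat) (E : samples n -> Prop) : R :=
  \sum_(X : samples n | `[< E X >]) prob P X.

Definition indep (P : S -> A -> S -> R) (n : nat) (T1 T2 : Type)
  (f : samples n -> T1) (g : samples n -> T2) : Prop :=
  forall (B : set T1) (C : set T2),
    Pr P (fun X => B (f X) /\ C (g X)) =
    Pr P (fun X => B (f X)) * Pr P (fun X => C (g X)).

Definition sample_block (n : nat) (s : S) (a : A) (X : samples n) : {ffun 'I_n -> S} :=
  [ffun i => X (s, a, i)].

Definition Vstar (rw : S -> A -> R) (gamma M : R) (n : nat) (X : samples n) : S -> R :=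
  fixpt (fun V => clip M (bellman rw (emp_kernel X) gamma V)).

Definition Vsu (rw : S -> A -> R) (gamma M : R) (s : S) (u : R) (n : nat)
  (X : samples n) : S -> R :=
  fixpt (fun V => clip M (bellman (rew_set rw s u) (absorb (emp_kernel X) s) gamma V)).

Definition ustar (rw : S -> A -> R) (gamma M : R) (n : nat) (X : samples n) (s : S) : R :=
  bellman rw (emp_kernel X) gamma (Vstar rw gamma M X) s - gamma * Vstar rw gamma M X s.

End Defs.

(* Clip_M o T is monotone, and moving the reward by e and the argument by c
   moves its value by at most e + gamma c.  Hence fixed points for rewards at
   distance e are at distance at most e / (1 - gamma): this is (i), and gives
   uniqueness; existence follows by taking the pointwise supremum of all
   post-fixed points, which are bounded by 1 / (1 - gamma).  Making s absorbing
   with reward u replaces the Bellman value at s by u + gamma V(s), so u*(s) is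
   exactly the reward that keeps V* a fixed point (ii); it lies in [0, 1]
   because V* >= 0 and the clipping either leaves V*(s) = T V*(s) or makes s a
   maximiser of V*.  Covering [0, 1] by the N midpoints (2k + 1) / (2N) and
   applying (i) gives (iii).  For (iv), the absorbing kernel never reads the
   samples drawn at s, and under the product law functions of disjoint blocks
   of coordinates are independent. *)

From HB Require Import structures.
From mathcomp Require Import all_boot all_order all_algebra.
From mathcomp Require Import all_classical all_reals ereal.
From mathcomp Require Import lra zify.
Set Implicit Arguments. Unset Strict Implicit.
Import Order.TTheory GRing.Theory Num.Theory.
Local Open Scope ring_scope.

Section Extrema.
Variable R : realType.

Lemma fmax_attained (T : finType) (F : T -> R) (t0 : T) :
  exists2 tm, fmax F = F tm & forall t, F t <= F tm.
Proof.
case: (@arg_maxP _ R T t0 xpredT F erefl) => tm _ Fmax.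
exists tm => [|t]; last by apply: Fmax.
rewrite /fmax; suff -> : \big[Order.max/-oo%E]_t (F t)%:E = (F tm)%:E by [].
apply/le_anti/andP; split.
  by apply: bigmax_le => [|t _]; rewrite ?leNye // lee_fin; apply: Fmax.
exact: (le_bigmax _ (fun t => (F t)%:E) tm).
Qed.

Lemma fmin_attained (T : finType) (F : T -> R) (t0 : T) :
  exists2 tm, fmin F = F tm & forall t, F tm <= F t.
Proof.
case: (@arg_minP _ R T t0 xpredT F erefl) => tm _ Fmin.
exists tm => [|t]; last by apply: Fmin.
rewrite /fmin; suff -> : \big[Order.min/+oo%E]_t (F t)%:E = (F tm)%:E by [].
apply/le_anti/andP; split.
  exact: (@bigmin_le _ _ T +oo%E tm (fun t => (F t)%:E)).
by apply: le_bigmin => [|t _]; rewrite ?leey // lee_fin; apply: Fmin.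
Qed.

Lemma fmax_ge (T : finType) (F : T -> R) t : F t <= fmax F.
Proof. by have [tm -> /(_ t)] := fmax_attained F t. Qed.

Lemma fmin_le (T : finType) (F : T -> R) t : fmin F <= F t.
Proof. by have [tm -> /(_ t)] := fmin_attained F t. Qed.

Lemma fmax_cst (T : finType) (t0 : T) (c : R) : fmax (fun _ : T => c) = c.
Proof. by have [tm ->] := fmax_attained (fun _ : T => c) t0. Qed.

Lemma fmax_shift (T : finType) (t0 : T) (F G : T -> R) c :
  (forall t, F t <= G t + c) -> fmax F <= fmax G + c.
Proof.
move=> FG; have [tm -> _] := fmax_attained F t0.
by rewrite (le_trans (FG tm)) // lerD2r fmax_ge.
Qed.

Lemma fmin_shift (T : finType) (t0 : T) (F G : T -> R) c :
  (forall t, F t <= G t + c) -> fmin F <= fmin G + c.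
Proof.
move=> FG; have [tm -> _] := fmin_attained G t0.
exact: le_trans (fmin_le F tm) (FG tm).
Qed.

Lemma monotone_fixpoint (T : Type) (F : (T -> R) -> T -> R) (V0 : T -> R) (b : R) :
  (forall V W, (forall t, V t <= W t) -> forall t, F V t <= F W t) ->
  (forall t, V0 t <= F V0 t) ->
  (forall V, (forall t, V t <= F V t) -> forall t, V t <= b) ->
  exists V, F V = V.
Proof.
move=> Fmono V0post post_le.
pose post V := forall t, V t <= F V t.
pose E t : set R := fun x => exists2 V, post V & V t = x.
have E_sup t : has_sup (E t).
  split; first by exists (V0 t), V0.
  by exists b => _ [V postV <-]; apply: post_le.
pose Vb t := sup (E t).
have Vb_ub V : post V -> forall t, V t <= Vb t.
  by move=> postV t; apply: sup_upper_bound => //; exists V.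
have postVb : post Vb.
  move=> t; apply: ge_sup; first by exists (V0 t), V0.
  by move=> _ [V postV <-]; apply: le_trans (postV t) (Fmono _ _ (Vb_ub V postV) t).
exists Vb; apply/funext => t; apply/le_anti/andP; split; last exact: postVb.
by apply: Vb_ub => t'; apply: Fmono.
Qed.

End Extrema.

Section Kernels.
Variables (R : realType) (S A : finType).

Lemma normr_le_supnorm (V : S -> R) t : `|V t| <= supnorm V.
Proof. exact: (le_bigmax _ (fun t => `|V t|) t). Qed.

Lemma supnorm_le (V : S -> R) c : 0 <= c -> (forall t, `|V t| <= c) -> supnorm V <= c.
Proof. by move=> c0 Vc; apply: bigmax_le => // t _; apply: Vc. Qed.

Definition stochastic (Q : S -> A -> S -> R) :=
  (forall t a t', 0 <= Q t a t') /\ (forall t a, \sum_t' Q t a t' = 1).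

Lemma kernel_avg_shift Q (V W : S -> R) c t a : stochastic Q ->
  (forall t', V t' <= W t' + c) ->
  \sum_t' Q t a t' * V t' <= \sum_t' Q t a t' * W t' + c.
Proof.
move=> [Q_ge0 Q_sum1] VW.
apply: (@le_trans _ _ (\sum_t' Q t a t' * (W t' + c))).
  by apply: ler_sum => t' _; apply: ler_wpM2l.
by under eq_bigr do rewrite mulrDr; rewrite big_split /= -mulr_suml Q_sum1 mul1r.
Qed.

Lemma kernel_avg_ge Q (V : S -> R) c t a : stochastic Q ->
  (forall t', c <= V t') -> c <= \sum_t' Q t a t' * V t'.
Proof.
move=> [Q_ge0 Q_sum1] cV.
apply: (@le_trans _ _ (\sum_t' Q t a t' * c)); first by rewrite -mulr_suml Q_sum1 mul1r.
by apply: ler_sum => t' _; apply: ler_wpM2l.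
Qed.

Lemma kernel_avg_le Q (V : S -> R) c t a : stochastic Q ->
  (forall t', V t' <= c) -> \sum_t' Q t a t' * V t' <= c.
Proof.
move=> [Q_ge0 Q_sum1] Vc.
apply: (@le_trans _ _ (\sum_t' Q t a t' * c)); last by rewrite -mulr_suml Q_sum1 mul1r.
by apply: ler_sum => t' _; apply: ler_wpM2l.
Qed.

Lemma sum_card_fibers (I : finType) (f : I -> S) : (\sum_t #|[set i | f i == t]| = #|I|)%N.
Proof.
rewrite -sum1_card (partition_big f xpredT) //=.
by apply: eq_bigr => t _; rewrite -sum1_card; apply: eq_bigl => i; rewrite inE.
Qed.

Lemma emp_kernel_stochastic n (X : samples S A n) : (0 < n)%N -> stochastic (emp_kernel R X).
Proof.
move=> n_gt0; split=> [t a t'|t a]; first by rewrite divr_ge0 ?ler0n.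
rewrite /emp_kernel -mulr_suml -natr_sum sum_card_fibers card_ord divff //.
by rewrite pnatr_eq0 -lt0n.
Qed.

Lemma absorb_stochastic (Q : S -> A -> S -> R) s : stochastic Q -> stochastic (absorb Q s).
Proof.
move=> [Q_ge0 Q_sum1]; split=> [t a t'|t a]; rewrite /absorb; case: (t == s) => //.
rewrite (bigD1 s) //= eqxx big1 ?addr0 // => t' /negbTE ->; by [].
Qed.

End Kernels.

Section Bellman.
Variables (R : realType) (S A : finType) (gamma M : R) (t0 : S) (a0 : A).
Hypotheses (gamma_ge0 : 0 <= gamma) (gamma_lt1 : gamma < 1) (M_ge0 : 0 <= M).

Local Notation value := (S -> R).
Local Notation reward := (S -> A -> R).
Local Notation kernel := (S -> A -> S -> R).

Definition clipped_bellman (rw : reward) (Q : kernel) (V : value) : value :=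
  clip M (bellman rw Q gamma V).

Lemma bellman_shift (rw1 rw2 : reward) (Q : kernel) (V W : value) e c : stochastic Q ->
  (forall t a, rw1 t a <= rw2 t a + e) -> (forall t, V t <= W t + c) ->
  forall t, bellman rw1 Q gamma V t <= bellman rw2 Q gamma W t + (e + gamma * c).
Proof.
move=> sQ rw12 VW t; apply: (fmax_shift a0) => a.
have := ler_wpM2l gamma_ge0 (kernel_avg_shift t a sQ VW); rewrite mulrDr.
have := rw12 t a; lra.
Qed.

Lemma bellman_le_cst (rw : reward) (Q : kernel) (V : value) c t : stochastic Q ->
  (forall t a, rw t a <= 1) -> (forall t, V t <= c) ->
  bellman rw Q gamma V t <= 1 + gamma * c.
Proof.
move=> sQ rw_le1 Vc; rewrite /bellman.
have [a -> _] := fmax_attained (fun a => rw t a + gamma * \sum_t' Q t a t' * V t') a0.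
by apply: lerD; [apply: rw_le1 | apply/ler_wpM2l/kernel_avg_le].
Qed.

Lemma bellman_ge_cst (rw : reward) (Q : kernel) (V : value) c t : stochastic Q ->
  (forall t a, 0 <= rw t a) -> (forall t, c <= V t) ->
  gamma * c <= bellman rw Q gamma V t.
Proof.
move=> sQ rw_ge0 cV; apply: le_trans (fmax_ge _ a0); rewrite -[X in X <= _]add0r.
by apply: lerD; [apply: rw_ge0 | apply/ler_wpM2l/kernel_avg_ge].
Qed.

Lemma bellman_absorb (rw : reward) (Q : kernel) s u (V : value) t :
  bellman (rew_set rw s u) (absorb Q s) gamma V t =
  if t == s then u + gamma * V s else bellman rw Q gamma V t.
Proof.
rewrite /bellman /rew_set /absorb; case: eqP => // _.
have -> : \sum_t' (t' == s)%:R * V t' = V s.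
  by rewrite (bigD1 s) //= eqxx mul1r big1 ?addr0 // => t' /negbTE ->; rewrite mul0r.
by rewrite fmax_cst.
Qed.

Lemma clip_le (V : value) t : clip M V t <= V t.
Proof. by rewrite /clip ge_min lexx. Qed.

Lemma clip_shift (V W : value) c : (forall t, V t <= W t + c) ->
  forall t, clip M V t <= clip M W t + c.
Proof.
move=> VW t; have fminVW := fmin_shift t0 VW; rewrite /clip.
case: (leP (W t) (M + fmin W)) => _; rewrite ge_min; first by rewrite VW.
by rewrite -addrA lerD2l fminVW orbT.
Qed.

Lemma clipped_bellman_shift (rw1 rw2 : reward) (Q : kernel) (V W : value) e c : stochastic Q ->
  (forall t a, rw1 t a <= rw2 t a + e) -> (forall t, V t <= W t + c) ->
  forall t, clipped_bellman rw1 Q V t <= clipped_bellman rw2 Q W t + (e + gamma * c).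
Proof. by move=> sQ rw12 VW; apply/clip_shift/bellman_shift. Qed.

Lemma clipped_bellman_mono (rw : reward) (Q : kernel) (V W : value) : stochastic Q ->
  (forall t, V t <= W t) -> forall t, clipped_bellman rw Q V t <= clipped_bellman rw Q W t.
Proof.
move=> sQ VW t.
suff : clipped_bellman rw Q V t <= clipped_bellman rw Q W t + (0 + gamma * 0).
  by rewrite mulr0 !addr0.
by apply: clipped_bellman_shift => // [t' a|t']; rewrite addr0.
Qed.

Lemma clipped_bellman_fix_dist (rw1 rw2 : reward) (Q : kernel) (V W : value) e : stochastic Q ->
  (forall t a, `|rw1 t a - rw2 t a| <= e) ->
  clipped_bellman rw1 Q V = V -> clipped_bellman rw2 Q W = W ->
  supnorm (fun t => V t - W t) <= e / (1 - gamma).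
Proof.
move=> sQ rw12 fixV fixW; set d := supnorm _.
have dVW t : `|V t - W t| <= d := normr_le_supnorm (fun t => V t - W t) t.
have d_ge0 : 0 <= d := le_trans (normr_ge0 _) (dVW t0).
have e_ge0 : 0 <= e := le_trans (normr_ge0 _) (rw12 t0 a0).
have [rw1_le rw2_le] : (forall t a, rw1 t a <= rw2 t a + e) /\
    (forall t a, rw2 t a <= rw1 t a + e).
  by split=> t a; have := rw12 t a; rewrite ler_norml => /andP[? ?]; lra.
have [V_le W_le] : (forall t, V t <= W t + d) /\ (forall t, W t <= V t + d).
  by split=> t; have := dVW t; rewrite ler_norml => /andP[? ?]; lra.
have : d <= e + gamma * d.
  apply: supnorm_le => [|t]; first by have := mulr_ge0 gamma_ge0 d_ge0; lra.
  have := clipped_bellman_shift sQ rw1_le V_le t.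
  have := clipped_bellman_shift sQ rw2_le W_le t.
  by rewrite fixV fixW ler_norml => ? ?; apply/andP; split; lra.
by rewrite ler_pdivlMr ?subr_gt0 // mulrBr mulr1; lra.
Qed.

Lemma clipped_bellman_fix_unique (rw : reward) (Q : kernel) (V W : value) : stochastic Q ->
  clipped_bellman rw Q V = V -> clipped_bellman rw Q W = W -> V = W.
Proof.
move=> sQ fixV fixW; have := clipped_bellman_fix_dist (e := 0) sQ _ fixV fixW.
rewrite mul0r => dist0; apply/funext => t; apply/eqP; rewrite -subr_eq0 -normr_le0.
apply: le_trans (normr_le_supnorm (fun t => V t - W t) t) (dist0 _) => t' a.
by rewrite subrr normr0.
Qed.

Lemma post_fixed_le (rw : reward) (Q : kernel) (V : value) :
  stochastic Q -> (forall t a, rw t a <= 1) ->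
  (forall t, V t <= clipped_bellman rw Q V t) -> forall t, V t <= (1 - gamma)^-1.
Proof.
move=> sQ rw_le1 postV t; have [tm _ V_le] := fmax_attained V t0.
have Vtm : V tm <= 1 + gamma * V tm.
  exact: le_trans (postV tm) (le_trans (clip_le _ tm) (bellman_le_cst tm sQ rw_le1 V_le)).
have one_sub_gamma_ge0 : 0 <= 1 - gamma by rewrite subr_ge0 ltW.
rewrite -[_^-1]mulr1 ler_pdivlMl ?subr_gt0 //.
have := ler_wpM2l one_sub_gamma_ge0 (V_le t); lra.
Qed.

Lemma clipped_bellman_fix_exists (rw : reward) (Q : kernel) :
  stochastic Q -> (forall t a, 0 <= rw t a <= 1) ->
  exists V, clipped_bellman rw Q V = V.
Proof.
move=> sQ rw01.
have [rw_ge0 rw_le1] : (forall t a, 0 <= rw t a) /\ (forall t a, rw t a <= 1).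
  by split=> t a; case/andP: (rw01 t a).
apply: (monotone_fixpoint (V0 := fun => 0) (b := (1 - gamma)^-1)).
- by move=> V W; apply: clipped_bellman_mono.
- have bellman0_ge0 t : 0 <= bellman rw Q gamma (fun => 0) t.
    by rewrite -[leLHS](mulr0 gamma); apply: bellman_ge_cst.
  move=> t; rewrite /clipped_bellman /clip le_min bellman0_ge0 /=.
  have [tm -> _] := fmin_attained (bellman rw Q gamma (fun => 0)) t0.
  by rewrite addr_ge0 ?bellman0_ge0.
- by move=> V; apply: post_fixed_le.
Qed.

Lemma fixptE (F : (S -> R) -> S -> R) V :
  (forall W, F W = W -> W = V) -> F V = V -> fixpt F = V.
Proof.
move=> unique fixV; apply: unique.
exact: (@xgetPex _ (fun => 0) (fun V => F V = V) (ex_intro _ V fixV)).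
Qed.

Lemma fixpt_clipped_bellman (rw : reward) (Q : kernel) (V : value) : stochastic Q ->
  clipped_bellman rw Q V = V -> fixpt (clipped_bellman rw Q) = V.
Proof.
by move=> sQ fixV; apply: fixptE => // W fixW; apply: clipped_bellman_fix_unique fixW fixV.
Qed.

Lemma clipped_bellman_fixpt (rw : reward) (Q : kernel) :
  stochastic Q -> (forall t a, 0 <= rw t a <= 1) ->
  clipped_bellman rw Q (fixpt (clipped_bellman rw Q)) = fixpt (clipped_bellman rw Q).
Proof.
move=> sQ rw01; have [V fixV] := clipped_bellman_fix_exists sQ rw01.
by rewrite (fixpt_clipped_bellman sQ fixV).
Qed.

End Bellman.

Section Grid.
Variable R : realType.

Lemma ceil_gt0_nat (x : R) : 0 < x -> exists2 N : nat, Num.ceil x = N%:Z & x <= N%:R.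
Proof.
move=> x_gt0; have ceil_ge0 : 0 <= Num.ceil x by rewrite ceil_ge0 (lt_trans _ x_gt0) ?ltrN10.
exists `|Num.ceil x|%N; first by rewrite gez0_abs.
by rewrite natr_absz ger0_norm // ceil_ge.
Qed.

Lemma floor_bracket (x : R) N : (0 < N)%N -> 0 <= x <= N%:R ->
  exists k, [/\ (k < N)%N, k%:R <= x & x <= k%:R + 1].
Proof.
move=> N_gt0 /andP[x_ge0 x_le].
have := floor_le x; have := floorD1_gt x; have := floor_ge0 x; rewrite x_ge0.
case: (Num.floor x) => // k _; rewrite intrD => x_lt x_ge.
have [kN|Nk] := ltnP k N; first by exists k; split => //; apply: ltW.
exists N.-1; split; [by rewrite prednK | | by rewrite natr1 prednK].
by apply: le_trans x_ge; rewrite ler_nat (leq_trans (leq_pred N) Nk).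
Qed.

Definition grid (N : nat) : seq R := [seq (2 * k + 1)%:R / (2 * N)%:R | k <- iota 0 N].

Lemma size_grid N : size (grid N) = N.
Proof. by rewrite size_map size_iota. Qed.

Lemma grid_uniq N : uniq (grid N).
Proof.
rewrite map_inj_in_uniq ?iota_uniq // => k k'; rewrite mem_iota => /andP[_ kN] _.
have N2_neq0 : (2 * N)%:R != 0 :> R by rewrite pnatr_eq0 muln_eq0 -lt0n (leq_ltn_trans _ kN).
move/(congr1 (fun y => y * (2 * N)%:R)); rewrite !divfK //.
by move/eqP; rewrite eqr_nat eqn_add2r eqn_mul2l => /eqP.
Qed.

Lemma grid_in01 N u : u \in grid N -> 0 <= u <= 1.
Proof.
case/mapP => k; rewrite mem_iota => /andP[_ kN] ->.
have N2_gt0 : 0 < (2 * N)%:R :> R by rewrite ltr0n muln_gt0 (leq_ltn_trans _ kN).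
by rewrite divr_ge0 ?ler0n //= ler_pdivrMr // mul1r ler_nat; lia.
Qed.

Lemma grid_cover N v : (0 < N)%N -> 0 <= v <= 1 ->
  exists2 u, u \in grid N & `|v - u| <= (2 * N)%:R^-1.
Proof.
move=> N_gt0 /andP[v_ge0 v_le1].
have vN : 0 <= v * N%:R <= N%:R by rewrite mulr_ge0 ?ler0n //= ler_piMl ?ler0n.
have [k [kN k_le k_ge]] := floor_bracket N_gt0 vN.
exists ((2 * k + 1)%:R / (2 * N)%:R); first by apply/mapP; exists k; rewrite ?mem_iota.
have N2_gt0 : 0 < (2 * N)%:R :> R by rewrite ltr0n muln_gt0.
have -> : v - (2 * k + 1)%:R / (2 * N)%:R = (v * (2 * N)%:R - (2 * k + 1)%:R) / (2 * N)%:R.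
  by rewrite mulrBl mulfK // gt_eqF.
rewrite normrM normfV (gtr0_norm N2_gt0) -[leRHS]mul1r ler_pM2r ?invr_gt0 //.
by rewrite ler_norml natrD !natrM; apply/andP; split; lra.
Qed.

End Grid.

Section EmpiricalValues.
Variables (R : realType) (S A : finType) (rw : S -> A -> R) (n : nat) (gamma M : R).
Variables (t0 : S) (a0 : A).
Hypotheses (rw01 : forall t a, 0 <= rw t a <= 1) (n_gt0 : (0 < n)%N).
Hypotheses (gamma_ge0 : 0 <= gamma) (gamma_lt1 : gamma < 1) (M_gt0 : 0 < M).

Local Notation Vstar := (Vstar rw gamma M).
Local Notation Vsu := (Vsu rw gamma M).
Local Notation ustar := (ustar rw gamma M).

Let rw_ge0 t a : 0 <= rw t a. Proof. by case/andP: (rw01 t a). Qed.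
Let rw_le1 t a : rw t a <= 1. Proof. by case/andP: (rw01 t a). Qed.
Let emp_stoch (X : samples S A n) := emp_kernel_stochastic R X n_gt0.
Let one_sub_gamma_ge0 : 0 <= 1 - gamma. Proof. by rewrite subr_ge0 ltW. Qed.

Lemma Vsu_fix s u (X : samples S A n) : 0 <= u <= 1 ->
  clipped_bellman gamma M (rew_set rw s u) (absorb (emp_kernel R X) s) (Vsu s u X)
  = Vsu s u X.
Proof.
move=> u01; apply: (clipped_bellman_fixpt t0 a0 gamma_ge0 gamma_lt1 (ltW M_gt0)).
  exact/absorb_stochastic/emp_stoch.
by move=> t a; rewrite /rew_set; case: (t == s).
Qed.

Lemma Vstar_fix (X : samples S A n) :
  clipped_bellman gamma M rw (emp_kernel R X) (Vstar X) = Vstar X.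
Proof. exact: (clipped_bellman_fixpt t0 a0 gamma_ge0 gamma_lt1 (ltW M_gt0)). Qed.

Lemma Vsu_lipschitz s (X : samples S A n) u u' : 0 <= u <= 1 -> 0 <= u' <= 1 ->
  supnorm (fun t => Vsu s u X t - Vsu s u' X t) <= `|u - u'| / (1 - gamma).
Proof.
move=> u01 u'01.
apply: (clipped_bellman_fix_dist t0 a0 gamma_ge0 gamma_lt1 _ _
  (Vsu_fix s X u01) (Vsu_fix s X u'01)).
  exact/absorb_stochastic/emp_stoch.
by move=> t a; rewrite /rew_set; case: (t == s); rewrite ?subrr ?normr0.
Qed.

Lemma Vstar_ge0 (X : samples S A n) t : 0 <= Vstar X t.
Proof.
have fixV := Vstar_fix X; set V := Vstar X in fixV *.
set T := bellman rw (emp_kernel R X) gamma V.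
have [tm _ V_ge] := fmin_attained V t0.
have T_ge t' : gamma * V tm <= T t' :=
  bellman_ge_cst a0 gamma_ge0 t' (emp_stoch X) rw_ge0 V_ge.
have : gamma * V tm <= V tm.
  rewrite -[in leRHS]fixV /clipped_bellman /clip -/T le_min T_ge /=.
  have [tm' -> _] := fmin_attained T t0; exact: ler_wpDl (ltW M_gt0) (T_ge tm').
rewrite -subr_ge0 -[X in X - _]mul1r -mulrBl pmulr_rge0 ?subr_gt0 // => Vtm_ge0.
exact: le_trans Vtm_ge0 (V_ge t).
Qed.

Lemma Vstar_le (X : samples S A n) t : (1 - gamma) * Vstar X t <= 1.
Proof.
have fixV := Vstar_fix X; set V := Vstar X in fixV *.
have [tm _ V_le] := fmax_attained V t0.
have : V tm <= 1 + gamma * V tm.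
  apply: le_trans (bellman_le_cst a0 gamma_ge0 tm (emp_stoch X) rw_le1 V_le).
  by rewrite -[in leLHS]fixV; apply: clip_le.
by have := ler_wpM2l one_sub_gamma_ge0 (V_le t); lra.
Qed.

Lemma ustar_in01 (X : samples S A n) s : 0 <= ustar X s <= 1.
Proof.
rewrite /ustar; have fixV := Vstar_fix X; set V := Vstar X in fixV *.
set T := bellman rw (emp_kernel R X) gamma V.
have V_clip t : V t = Num.min (T t) (M + fmin T) by rewrite -{1}fixV.
have Vs_ge0 := Vstar_ge0 X s; have Vs_le := Vstar_le X s; rewrite -/V in Vs_ge0 Vs_le.
have V_le_T : V s <= T s by rewrite V_clip ge_min lexx.
apply/andP; split; first by have := mulr_ge0 one_sub_gamma_ge0 Vs_ge0; lra.
have [T_le|T_gt] := leP (T s) (M + fmin T).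
  have Vs : V s = T s by rewrite V_clip (min_idPl T_le).
  lra.
have V_le_Vs t : V t <= V s.
  by rewrite (V_clip s) (min_idPr (ltW T_gt)) V_clip ge_min lexx orbT.
by have := bellman_le_cst a0 gamma_ge0 s (emp_stoch X) rw_le1 V_le_Vs; rewrite -/T; lra.
Qed.

Lemma Vsu_ustar (X : samples S A n) s : Vsu s (ustar X s) X = Vstar X.
Proof.
apply: (fixpt_clipped_bellman t0 a0 gamma_ge0 gamma_lt1).
  exact/absorb_stochastic/emp_stoch.
rewrite -[RHS](Vstar_fix X) /clipped_bellman; congr clip; apply/funext => t.
by rewrite (bellman_absorb _ a0); case: eqP => [->|//]; rewrite /ustar subrK.
Qed.

Lemma Vstar_grid_approx (X : samples S A n) s N eps :
  (0 < N)%N -> 1 <= 2 * N%:R * (1 - gamma) * eps ->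
  exists2 u, u \in grid R N & supnorm (fun t => Vstar X t - Vsu s u X t) <= eps.
Proof.
move=> N_gt0 N_large; have ustar01 := ustar_in01 X s.
have [u u_grid u_near] := grid_cover N_gt0 ustar01.
exists u => //; rewrite -(Vsu_ustar X s).
apply: le_trans (Vsu_lipschitz s X ustar01 (grid_in01 u_grid)) _.
rewrite ler_pdivrMr ?subr_gt0 //; apply: le_trans u_near _.
by rewrite -div1r ler_pdivrMr ?ltr0n ?muln_gt0 // natrM; lra.
Qed.

End EmpiricalValues.

Section Sampling.
Variables (R : realType) (S A : finType) (n : nat) (P : S -> A -> S -> R).
Hypothesis P_sum1 : forall t a, \sum_t' P t a t' = 1.

Lemma sum_prob : \sum_(X : samples S A n) prob P X = 1.
Proof.
rewrite /prob -(bigA_distr_bigA (fun (k : S * A * 'I_n) t => P k.1.1 k.1.2 t)).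
by rewrite big1 // => k _; apply: P_sum1.
Qed.

Lemma Pr_surely (E : samples S A n -> Prop) : (forall X, E X) -> Pr P E = 1.
Proof. by move=> EX; rewrite /Pr -sum_prob; apply: eq_bigl => X; apply/asboolT. Qed.

Lemma Pr_indicator (E : samples S A n -> Prop) :
  Pr P E = \sum_(X : samples S A n) (`[< E X >])%:R * prob P X.
Proof.
rewrite /Pr big_mkcond; apply: eq_bigr => X _.
by case: asboolP => _; rewrite ?mul1r ?mul0r.
Qed.

Definition splice (K : pred (S * A * 'I_n)) (X Y : samples S A n) : samples S A n :=
  [ffun k => if K k then Y k else X k].

Lemma spliceK K X Y : splice K (splice K X Y) (splice K Y X) = X.
Proof. by apply/ffunP => k; rewrite !ffunE; case: (K k). Qed.

Lemma prob_splice K X Y :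
  prob P (splice K X Y) * prob P (splice K Y X) = prob P X * prob P Y.
Proof.
rewrite /prob -!big_split /=; apply: eq_bigr => k _.
by rewrite !ffunE; case: (K k); rewrite // mulrC.
Qed.

Lemma indep_splice K (T1 T2 : Type) (f : samples S A n -> T1) (g : samples S A n -> T2) :
  (forall X Y, f (splice K X Y) = f X) -> (forall X Y, g (splice K X Y) = g Y) ->
  indep P f g.
Proof.
move=> fK gK B C; rewrite !Pr_indicator.
(* [swap] is an involution preserving the weight [prob P X * prob P Y] of a pair
   of outcomes; after it, [f] reads only the first outcome and [g] only the
   second, so the double sum factors. *)
pose F (p : samples S A n * samples S A n) : R :=
  (`[< B (f p.1) /\ C (g p.1) >])%:R * prob P p.1 * prob P p.2.
pose swap (p : samples S A n * samples S A n) := (splice K p.1 p.2, splice K p.2 p.1).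
have swapK : involutive swap by case=> X Y; rewrite /swap /= !spliceK.
have -> : \sum_X (`[< B (f X) /\ C (g X) >])%:R * prob P X = \sum_p F p.
  rewrite -(pair_bigA _ (fun X Y => F (X, Y))) /=; apply: eq_bigr => X _.
  by rewrite /F /= -big_distrr /= sum_prob mulr1.
rewrite (reindex_inj (inv_inj swapK)) -(pair_bigA _ (fun X Y => F (swap (X, Y)))) /=.
rewrite big_distrl /=; apply: eq_bigr => X _; rewrite big_distrr /=; apply: eq_bigr => Y _.
rewrite /F /swap /= -mulrA prob_splice fK gK.
case: asboolP => [[BX CY]|notBC]; first by rewrite (asboolT BX) (asboolT CY) !mul1r.
case: (asboolP (B (f X))) => BX; case: (asboolP (C (g Y))) => CY; rewrite ?mul0r ?mulr0 //.
by case: notBC.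
Qed.

Lemma absorb_emp_kernel_splice s (X Y : samples S A n) :
  absorb (emp_kernel R (splice (fun k => k.1.1 == s) X Y)) s = absorb (emp_kernel R X) s.
Proof.
apply/funext => t; apply/funext => a; apply/funext => t'; rewrite /absorb.
have [//|t_neq_s] := eqVneq t s; rewrite /emp_kernel.
by congr (_%:R / _); apply: eq_card => i; rewrite !inE ffunE /= (negbTE t_neq_s).
Qed.

Lemma Vsu_indep_sample_block (rw : S -> A -> R) gamma M s u a :
  indep P (fun X : samples S A n => Vsu rw gamma M s u X) (sample_block s a).
Proof.
apply: (@indep_splice (fun k => k.1.1 == s)) => X Y.
  by rewrite /Vsu absorb_emp_kernel_splice.
by apply/ffunP => i; rewrite !ffunE /= eqxx.
Qed.

End Sampling.

Unset Implicit Arguments. Set Strict Implicit.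

Theorem lemma20 (R : realType) (S A : finType) (P : S -> A -> S -> R)
  (rw : S -> A -> R) (n : nat) (gamma M : R) (s : S) :
  (0 < #|A|)%N ->
  (forall t a t', 0 <= P t a t') ->
  (forall t a, \sum_(t' : S) P t a t' = 1) ->
  (forall t a, 0 <= rw t a <= 1) ->
  (0 < n)%N ->
  0 < gamma < 1 -> 0 < M ->
  (* (i) *)
  (forall (X : samples S A n) (u u' : R), 0 <= u <= 1 -> 0 <= u' <= 1 ->
     supnorm (fun t => Vsu rw gamma M s u X t - Vsu rw gamma M s u' X t)
       <= `|u - u'| / (1 - gamma))
  (* (ii) *)
  /\ (forall X : samples S A n,
        0 <= ustar rw gamma M X s <= 1 /\
        Vsu rw gamma M s (ustar rw gamma M X s) X = Vstar rw gamma M X)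
  (* (iii) *)
  /\ (forall eps : R, 0 < eps ->
        exists U : seq R,
          [/\ uniq U, (forall u, u \in U -> 0 <= u <= 1),
              (size U)%:Z = Num.ceil (1 / (2 * (1 - gamma) * eps)) &
              Pr P (fun X : samples S A n => forall t : S, exists2 u, u \in U &
                 supnorm (fun t' => Vstar rw gamma M X t' - Vsu rw gamma M t u X t')
                   <= eps) = 1])
  (* (iv) *)
  /\ (forall (u : R) (a : A), 0 <= u <= 1 ->
        indep P (fun X : samples S A n => Vsu rw gamma M s u X)
                (sample_block s a)).
Proof.
move=> /card_gt0P[a0 _] _ P_sum1 rw01 n_gt0 /andP[gamma_gt0 gamma_lt1] M_gt0.
have gamma_ge0 := ltW gamma_gt0.
split; [|split; [|split]].
- by move=> X u u'; apply: (Vsu_lipschitz s a0 rw01 n_gt0 gamma_ge0 gamma_lt1 M_gt0).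
- by move=> X; split; [apply: (ustar_in01 s a0 rw01 n_gt0 gamma_ge0 gamma_lt1 M_gt0) |
                        apply: (Vsu_ustar s a0 rw01 n_gt0 gamma_ge0 gamma_lt1 M_gt0)].
- move=> eps eps_gt0.
  have denom_gt0 : 0 < 2 * (1 - gamma) * eps by rewrite !mulr_gt0 ?subr_gt0.
  have [N EN N_large] := ceil_gt0_nat (divr_gt0 ltr01 denom_gt0).
  have N_gt0 : (0 < N)%N by rewrite -(ltr0n R) (lt_le_trans _ N_large) ?divr_gt0.
  exists (grid R N); split; [exact: grid_uniq | exact: grid_in01 | by rewrite size_grid EN |].
  apply: Pr_surely => // X t.
  apply: (Vstar_grid_approx s a0 rw01 n_gt0 gamma_ge0 gamma_lt1 M_gt0) => //.
  by move: N_large; rewrite ler_pdivrMr //; lra.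
- by move=> u a _; apply: Vsu_indep_sample_block.
Qed.
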